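(* Let $w=a_{u_1^1}\cdots a_{u_n^r}|b_{v_1^1}\cdots b_{v_n^r}\in W^*(d,2m;\mathbb T)$. Then [$\phi(w)$ is an $r$-configuration of $U$ and $V$ and $\Phi(\phi(w))=w$] if and only if $w$ satisfies Condition (C).
   Context: $n,r,d\ge1$, $m=rn$. $U=\{u_1\prec\cdots\prec u_n\}$, $V=\{v_1\prec\cdots\prec v_n\}$; $\overline U=U\times[r]$, $\overline V=V\times[r]$ ordered lexicographically (write $u^s$ for $(u,s)$). An $r$-configuration is a bijection between $\overline U$ and $\overline V$; a quasi configuration is a partial matching. Pairs $(\bar u,\bar v),(\bar u',\bar v')$ are noncrossing if ($\bar u\prec\bar u'$ and $\bar v\prec\bar v'$) or ($\bar u'\prec\bar u$ and $\bar v'\prec\bar v$). Walks $w=a_{u_1^1}\cdots a_{u_n^r}|b_{v_1^1}\cdots b_{v_n^r}$, $a_{\bar u},b_{\bar v}\in[d]$, denote walks in $\mathbb Z^d$ from the origin with steps $e_{a_{\bar u}}$ ($\bar u$ increasing) then $-e_{b_{\bar v}}$ ($\bar v$ increasing). For a permutation $\pi$ of $[d]$, $T(\pi)=(1-\pi(1),\dots,d-\pi(d))$; $\mathbb T$ is the set of all $T(\pi)$; $W^*(d,2m;\mathbb T)$ is the set of such walks ending in $\mathbb T$. For an $r$-configuration $F$: $a_{\bar u}$ is the maximum size of a set of pairwise noncrossing pairs of $F$ containing the pair $(\bar u,\bar v')\in F$, all of whose pairs $(x,y)$ satisfy $x\preceq\bar u$, $y\preceq\bar v'$; $b_{\bar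 v}$ symmetrically; $\Phi(F)=a_{u_1^1}\cdots a_{u_n^r}|b_{v_1^1}\cdots b_{v_n^r}$. $A_k(w)=\{\bar u:a_{\bar u}=k\}$, $B_k(w)=\{\bar v:b_{\bar v}=k\}$; connecting equal-size ordered sets $A,B$ in a crossing way: pair the $i$-th smallest of $A$ with the $i$-th largest of $B$; $\phi(w)$: for each $k$, if $|A_k(w)|\ge|B_k(w)|$ connect the $|B_k(w)|$ smallest elements of $A_k(w)$ with $B_k(w)$ in a crossing way, else connect $A_k(w)$ with the $|A_k(w)|$ largest elements of $B_k(w)$ in a crossing way. For $\bar u\in\overline U$, $k(\bar u)=|\{\bar u'\preceq\bar u: a_{\bar u'}=a_{\bar u}\}|$ and $l(\bar u)=|\{\bar u'\preceq\bar u: a_{\bar u'}=a_{\bar u}-1\}|$. Condition (C): for every $\bar u$ with $a_{\bar u}>1$, we have $l(\bar u)>0$, the negative step sequence $b_{v_1^1}\cdots b_{v_n^r}$ contains at least $l(\bar u)$ occurrences of $a_{\bar u}-1$ and at least $k(\bar u)$ occurrences of $a_{\bar u}$, and the $l(\bar u)$-th-to-last occurrence of $a_{\bar u}-1$ in it comes before the $k(\bar u)$-th-to-last occurrence of $a_{\bar u}$ in it. *)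

From mathcomp Require Import all_boot all_order all_algebra.
From mathcomp Require Import perm.
Set Implicit Arguments. Unset Strict Implicit. Unset Printing Implicit Defensive.

(* \overline U = U x [r] (and likewise \overline V), with U = {u_1 < ... < u_n}
   encoded as 'I_n and [r] as 'I_r; ordered lexicographically. *)
Definition idx (n r : nat) : finType := ('I_n * 'I_r)%type.

Section Defs.
Variables n r d : nat.
Local Notation I := (idx n r).

Definition ltI (x y : I) : bool :=
  (x.1 < y.1)%N || ((x.1 == y.1) && (x.2 < y.2)%N).
Definition leI (x y : I) : bool := (x == y) || ltI x y.

Definition is_rconfig (F : {set I * I}) : Prop :=
  (forall x : I, #|[set y : I | (x, y) \in F]| = 1%N) /\
  (forall y : I, #|[set x : I | (x, y) \in F]| = 1%N).

Definition noncrossing (p q : I * I) : bool :=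
  (ltI p.1 q.1 && ltI p.2 q.2) || (ltI q.1 p.1 && ltI q.2 p.2).

Definition nc_chain (F : {set I * I}) (u v : I) (S : {set I * I}) : bool :=
  [&& S \subset F, (u, v) \in S,
      [forall p in S, forall q in S, (p != q) ==> noncrossing p q] &
      [forall p in S, leI p.1 u && leI p.2 v]].

Definition Phi_a (F : {set I * I}) (u : I) : nat :=
  \max_(v : I | (u, v) \in F) \max_(S : {set I * I} | nc_chain F u v S) #|S|.
Definition Phi_b (F : {set I * I}) (v : I) : nat :=
  \max_(u : I | (u, v) \in F) \max_(S : {set I * I} | nc_chain F u v S) #|S|.

(* walks w = a | b in W^*(d, 2m; T) : steps in [d] = {1..d}, endpoint
   (sum_ubar e_{a_ubar} - sum_vbar e_{b_vbar}) equal to T(pi) for a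
   permutation pi of [d]; [d] is encoded by 'I_d via k |-> k+1. *)
Definition in_Wstar (a b : I -> nat) : Prop :=
  (forall x, 0 < a x <= d)%N /\ (forall y, 0 < b y <= d)%N /\
  exists pi : {perm 'I_d}, forall k : 'I_d,
    ((#|[set x | a x == k.+1]|%:Z - #|[set y | b y == k.+1]|%:Z)
      = (k.+1)%:Z - (pi k).+1%:Z)%R.

Definition A_ (a : I -> nat) (k : nat) : {set I} := [set x | a x == k].
Definition B_ (b : I -> nat) (k : nat) : {set I} := [set y | b y == k].

Definition rank_low (A : {set I}) (x : I) : nat := #|[set x' in A | ltI x' x]|.
Definition rank_high (B : {set I}) (y : I) : nat := #|[set y' in B | ltI y y']|.

Definition smallest (k : nat) (A : {set I}) : {set I} :=
  [set x in A | rank_low A x < k]%N.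
Definition largest (k : nat) (B : {set I}) : {set I} :=
  [set y in B | rank_high B y < k]%N.

Definition connect_crossing (A B : {set I}) : {set I * I} :=
  [set p | [&& p.1 \in A, p.2 \in B & rank_low A p.1 == rank_high B p.2]].

Definition phi (a b : I -> nat) : {set I * I} :=
  \bigcup_(k < d.+1)
    (if #|B_ b k| <= #|A_ a k| then
       connect_crossing (smallest #|B_ b k| (A_ a k)) (B_ b k)
     else connect_crossing (A_ a k) (largest #|A_ a k| (B_ b k)))%N.

Definition kk (a : I -> nat) (u : I) : nat := #|[set u' | leI u' u & a u' == a u]|.
Definition ll (a : I -> nat) (u : I) : nat := #|[set u' | leI u' u & a u' == (a u).-1]|.

Definition jth_to_last (b : I -> nat) (c j : nat) (y : I) : bool :=
  (b y == c) && (#|[set y' | leI y y' & b y' == c]| == j).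

Definition condC (a b : I -> nat) : Prop :=
  forall u : I, (1 < a u)%N ->
    [/\ (0 < ll a u)%N,
        (ll a u <= #|B_ b (a u).-1|)%N,
        (kk a u <= #|B_ b (a u)|)%N &
        exists y1 y2 : I, [&& jth_to_last b (a u).-1 (ll a u) y1,
                              jth_to_last b (a u) (kk a u) y2 & ltI y1 y2]].
End Defs.

From mathcomp Require Import all_boot all_order all_algebra.
From mathcomp Require Import perm zify.
Set Implicit Arguments. Unset Strict Implicit. Unset Printing Implicit Defensive.
Set Bullet Behavior "Strict Subproofs".

(* Within each level k, phi(w) pairs the i-th smallest step of value k on the
   left with the i-th largest one on the right, so it is an r-configuration
   exactly when every level has as many positive as negative steps.  For such
   a matching, every longest noncrossing chain ending at a pair of level k has
   length k if and only if each pair of level k > 1 lies above some pair of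
   level k - 1: then levels strictly decrease along chains, and chains can be
   built level by level.  Unfolding ranks, this support property is
   Condition (C).  Conversely (C) gives |A_k| <= |B_k| for k > 1, so the
   endpoint T(pi) of the walk satisfies pi(j) >= j for all j, whence pi = id
   and all levels are balanced. *)

Record strict_total (T : eqType) (lt : rel T) : Prop := StrictTotal {
  st_irr : irreflexive lt;
  st_trans : transitive lt;
  st_total : forall x y, x != y -> lt x y || lt y x }.

Section Rank.
Variables (T : finType) (lt : rel T).
Hypothesis ltP : strict_total lt.

Definition rank_of (A : {set T}) (x : T) : nat := #|[set x' in A | lt x' x]|.

Lemma rank_of_mono (A : {set T}) x x' : x \in A -> lt x x' -> rank_of A x < rank_of A x'.
Proof.
move=> xA lx; apply: proper_card; apply/properP; split.
  by apply/subsetP=> z; rewrite !inE => /andP[-> /(st_trans ltP)->].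
by exists x; rewrite !inE ?xA ?lx ?(st_irr ltP) ?andbF.
Qed.

Lemma rank_of_inj (A : {set T}) : {in A &, injective (rank_of A)}.
Proof.
move=> x x' xA x'A e; apply/eqP; apply/negPn/negP => /(st_total ltP)/orP[] lx.
  by have := rank_of_mono xA lx; rewrite e ltnn.
by have := rank_of_mono x'A lx; rewrite e ltnn.
Qed.

Lemma rank_of_le_inv (A : {set T}) x x' :
  x' \in A -> rank_of A x <= rank_of A x' -> (x == x') || lt x x'.
Proof.
move=> x'A le; case: eqVneq => //= /(st_total ltP)/orP[//|lx].
by have := rank_of_mono x'A lx; rewrite ltnNge le.
Qed.

Lemma rank_of_le (A : {set T}) x x' : lt x x' -> rank_of A x <= rank_of A x'.
Proof.
by move=> lx; apply/subset_leq_card/subsetP=> z; rewrite !inE => /andP[-> /(st_trans ltP)->].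
Qed.

Lemma lt_of_rank_of_lt (A : {set T}) x x' : rank_of A x < rank_of A x' -> lt x x'.
Proof.
case: (eqVneq x x') => [->|/(st_total ltP)/orP[//|lx]]; first by rewrite ltnn.
by rewrite ltnNge rank_of_le.
Qed.

Lemma rank_of_lt_card (A : {set T}) x : x \in A -> rank_of A x < #|A|.
Proof.
move=> xA; apply: proper_card; apply/properP; split.
  by apply/subsetP=> z; rewrite !inE => /andP[].
by exists x => //; rewrite !inE (st_irr ltP) andbF.
Qed.

Lemma rank_of_surj (A : {set T}) i : i < #|A| -> exists2 x, x \in A & rank_of A x = i.
Proof.
move=> hi; set s := map (rank_of A) (enum A).
have us : uniq s by rewrite map_inj_in_uniq ?enum_uniq // => x y; rewrite !mem_enum; exact: rank_of_inj.
have sub : {subset s <= iota 0 #|A|}.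
  by move=> j /mapP[x]; rewrite mem_enum mem_iota => xA ->; exact: rank_of_lt_card.
have [|_ e] := uniq_min_size us sub; first by rewrite size_iota size_map -cardE.
have : i \in s by rewrite e mem_iota.
by case/mapP=> x; rewrite mem_enum => xA ->; exists x.
Qed.

Lemma card_rank_of_eq (A : {set T}) i : #|[set x in A | rank_of A x == i]| = (i < #|A|).
Proof.
case: ltnP => [/rank_of_surj[x xA <-]|le].
  apply/eqP/cards1P; exists x; apply/setP=> z; rewrite !inE.
  by apply/andP/eqP=> [[zA /eqP/rank_of_inj->]|->].
apply/eqP; rewrite cards_eq0; apply/eqP/setP=> z; rewrite !inE.
by apply/andP=> -[/rank_of_lt_card + /eqP zi]; rewrite zi ltnNge le.
Qed.

Lemma card_le_of_rank_bound (A : {set T}) m :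
  {in A, forall x, rank_of A x < m} -> #|A| <= m.
Proof.
case cA: #|A| => [//|k] hm.
have [|x xA <-] := @rank_of_surj A k; first by rewrite cA.
exact: hm.
Qed.

Lemma card_upto_rank_of (A : {set T}) x : x \in A ->
  #|[set x' in A | (x' == x) || lt x' x]| = (rank_of A x).+1.
Proof.
move=> xA; have := cardsU1 x [set x' in A | lt x' x].
rewrite !inE (st_irr ltP) andbF /= add1n => <-.
by apply: eq_card => z; rewrite !inE; case: eqVneq => [->|] //=; rewrite xA.
Qed.

Lemma rank_of_restrict (A : {set T}) m x :
  rank_of A x < m -> rank_of [set x' in A | rank_of A x' < m] x = rank_of A x.
Proof.
move=> h; apply: eq_card => z; rewrite !inE.
case zA: (z \in A) => //=; case lz: (lt z x); rewrite ?andbF //=.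
by rewrite (ltn_trans (rank_of_mono zA lz) h).
Qed.

End Rank.

Lemma strict_total_flip (T : eqType) (lt : rel T) :
  strict_total lt -> strict_total (fun x y => lt y x).
Proof.
case=> irr tr tot; split=> // [y x z h1 h2|x y /tot]; first exact: tr h2 h1.
by rewrite orbC.
Qed.

Section MaximalElement.
Variables (T : finType) (lt : rel T).
Hypotheses (lt_irr : irreflexive lt) (lt_trans : transitive lt).

Lemma exists_maximal (A : {set T}) :
  A != set0 -> exists2 x, x \in A & {in A, forall y, ~~ lt x y}.
Proof.
case/set0Pn=> x0 x0A.
pose lower x := #|[set y in A | lt y x]|.
case: (@arg_maxnP _ x0 (fun x => x \in A) lower x0A) => x xA xmax.
exists x => // y yA; apply/negP=> lxy; have := xmax y yA; apply/negP; rewrite -ltnNge.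
apply/proper_card/properP; split.
  by apply/subsetP=> z; rewrite !inE => /andP[-> /lt_trans->].
by exists x; rewrite !inE ?xA ?lxy ?lt_irr.
Qed.

End MaximalElement.

Lemma ltI_strict n r : strict_total (@ltI n r).
Proof.
split=> [x|y x z|[x1 x2] [y1 y2] ne]; rewrite /ltI.
- by rewrite ltnn eqxx ltnn.
- move=> /orP[h|/andP[/eqP e h]] /orP[h'|/andP[/eqP e' h']]; apply/orP.
  + by left; exact: ltn_trans h h'.
  + by left; rewrite -e'.
  + by left; rewrite e.
  + by right; rewrite e e' eqxx (ltn_trans h h').
- rewrite /=; case: (ltngtP x1 y1) => [//||/ord_inj e1]; first by rewrite orbT.
  subst y1; rewrite eqxx /=; case: (ltngtP x2 y2) => // /ord_inj e2.
  by move: ne; rewrite e2 eqxx.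
Qed.

Section LevelMatch.
Variables (n r : nat) (a b : idx n r -> nat).
Local Notation I := (idx n r).
Let ltIP := ltI_strict n r.
Let gtIP := strict_total_flip ltIP.
Local Notation lo k x := (rank_of (@ltI n r) (A_ a k) x).
Local Notation hi k y := (rank_of (fun s t => @ltI n r t s) (B_ b k) y).

Definition level_match : {set I * I} :=
  [set p | (a p.1 == b p.2) && (lo (a p.1) p.1 == hi (a p.1) p.2)].

Definition balanced := forall k, #|A_ a k| = #|B_ b k|.

Lemma in_level_match x y :
  ((x, y) \in level_match) = (a x == b y) && (lo (a x) x == hi (a x) y).
Proof. by rewrite inE. Qed.

Lemma level_match_level p : p \in level_match -> a p.1 = b p.2.
Proof. by rewrite inE => /andP[/eqP]. Qed.

Lemma phi_level_match d : (forall x, a x <= d) -> phi d a b = level_match.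
Proof.
have rank_lowE A x : rank_low A x = rank_of (@ltI n r) A x by [].
have rank_highE B y : rank_high B y = rank_of (fun s t => @ltI n r t s) B y by [].
move=> ha; apply/setP => -[x y]; rewrite in_level_match; apply/bigcupP/idP.
- case=> k _; case: ifP => _; rewrite !inE /= ?rank_lowE ?rank_highE => /and3P[].
  + move=> /andP[/eqP ax hx] /eqP by_.
    by rewrite rank_of_restrict // ax by_ => ->; rewrite eqxx.
  + move=> /eqP ax /andP[/eqP by_ hy].
    by rewrite rank_of_restrict // ax by_ => ->; rewrite eqxx.
- case/andP=> /eqP e /eqP he.
  exists (Ordinal (ha x : a x < d.+1)) => //=.
  have hlo : lo (a x) x < #|A_ a (a x)| by rewrite rank_of_lt_card // inE.
  have hhi : hi (a x) y < #|B_ b (a x)| by rewrite rank_of_lt_card // inE e.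
  case: ifP => _; rewrite !inE /= ?rank_lowE ?rank_highE -e !eqxx /=.
  + by rewrite (rank_of_restrict ltIP) he ?eqxx ?andbT.
  + by rewrite (rank_of_restrict gtIP) -he ?eqxx ?andbT.
Qed.

Lemma card_level_match_row x :
  #|[set y | (x, y) \in level_match]| = (lo (a x) x < #|B_ b (a x)|).
Proof.
rewrite -(card_rank_of_eq gtIP); apply: eq_card => y; rewrite !inE /=.
by apply/andP/andP => -[h1 h2]; split; rewrite eq_sym.
Qed.

Lemma card_level_match_col y :
  #|[set x | (x, y) \in level_match]| = (hi (b y) y < #|A_ a (b y)|).
Proof.
rewrite -(card_rank_of_eq ltIP); apply: eq_card => x; rewrite !inE /=.
by case: eqVneq => [->|].
Qed.

Lemma level_match_rconfig : is_rconfig level_match <-> balanced.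
Proof.
split=> [[hx hy] k|hc]; last first.
  split=> [x|y]; rewrite ?card_level_match_row ?card_level_match_col.
    by rewrite -hc rank_of_lt_card // inE.
  by rewrite hc rank_of_lt_card // inE.
apply/eqP; rewrite eqn_leq; apply/andP; split.
- apply: (card_le_of_rank_bound ltIP) => x; rewrite inE => /eqP <-.
  by have := hx x; rewrite card_level_match_row; case: ltnP.
- apply: (card_le_of_rank_bound gtIP) => y; rewrite inE => /eqP <-.
  by have := hy y; rewrite card_level_match_col; case: ltnP.
Qed.

End LevelMatch.

Section Chains.
Variables n r : nat.
Local Notation I := (idx n r).
Let ltIP := ltI_strict n r.
Implicit Types (F S : {set I * I}) (p q : I * I) (u v : I).

Definition below p q := ltI p.1 q.1 && ltI p.2 q.2.

Lemma below_irr : irreflexive below.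
Proof. by move=> p; rewrite /below (st_irr ltIP). Qed.

Lemma below_trans : transitive below.
Proof.
move=> q p s /andP[h1 h2] /andP[h3 h4].
by rewrite /below (st_trans ltIP h1 h3) (st_trans ltIP h2 h4).
Qed.

Definition chain_num F u v := \max_(S | nc_chain F u v S) #|S|.

Lemma nc_chainP F u v S :
  reflect [/\ S \subset F, (u, v) \in S,
              {in S &, forall p q, p != q -> below p q || below q p} &
              {in S, forall p, leI p.1 u && leI p.2 v}]
          (nc_chain F u v S).
Proof.
apply: (iffP and4P) => -[sF uvS hnc hle]; split=> //.
- by move=> p q pS qS; move/forall_inP/(_ p pS)/forall_inP/(_ q qS)/implyP: hnc.
- exact/forall_inP.
- by apply/forall_inP=> p pS; apply/forall_inP=> q qS; apply/implyP; exact: hnc.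
- exact/forall_inP.
Qed.

Lemma nc_chain_below F u v S p :
  nc_chain F u v S -> p \in S -> p != (u, v) -> below p (u, v).
Proof.
case/nc_chainP=> _ uvS hnc hle pS ne.
case/orP: (hnc _ _ pS uvS ne) => // /andP[/= lt1 _].
have /andP[] := hle p pS; rewrite /leI => /orP[/eqP e|lt2] _.
  by move: lt1; rewrite -e (st_irr ltIP).
by have := st_irr ltIP u; rewrite (st_trans ltIP lt1 lt2).
Qed.

Lemma nc_chain_of_below F u v S : S \subset F -> (u, v) \in S ->
  {in S &, forall p q, p != q -> below p q || below q p} ->
  {in S, forall p, (p == (u, v)) || below p (u, v)} -> nc_chain F u v S.
Proof.
move=> sF uvS hnc hle; apply/nc_chainP; split=> // p /hle /orP[/eqP -> | /andP[l1 l2]].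
  by rewrite /leI !eqxx.
by rewrite /leI l1 l2 !orbT.
Qed.

Lemma nc_chain1 F u v : (u, v) \in F -> nc_chain F u v [set (u, v)].
Proof.
move=> uvF; apply: nc_chain_of_below; rewrite ?sub1set ?inE //.
  by move=> p q /set1P-> /set1P->; rewrite eqxx.
by move=> p /set1P->; rewrite eqxx.
Qed.

Lemma nc_chain_extend F u v S p : nc_chain F u v S -> p \in F -> below (u, v) p ->
  nc_chain F p.1 p.2 (p |: S) /\ #|p |: S| = #|S|.+1.
Proof.
move=> hS pF uvp; have [sF uvS hnc _] := nc_chainP _ _ _ _ hS.
have belowS s : s \in S -> below s p.
  move=> sS; case: (eqVneq s (u, v)) => [->//|ne].
  exact: below_trans (nc_chain_below hS sS ne) uvp.
have pS : p \notin S by apply/negP=> /belowS; rewrite below_irr.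
split; last by rewrite cardsU1 pS.
apply: nc_chain_of_below; rewrite -?surjective_pairing.
- by rewrite subUset sub1set pF sF.
- exact: setU11.
- move=> s t /setU1P[->|sS] /setU1P[->|tS]; rewrite ?eqxx // => ne.
  + by rewrite belowS ?orbT.
  + by rewrite belowS.
  + exact: hnc.
- by move=> s /setU1P[->|/belowS->]; rewrite ?eqxx ?orbT.
Qed.

Lemma nc_chain_predecessor F u v S : nc_chain F u v S -> 1 < #|S| ->
  exists2 q, below q (u, v) & nc_chain F q.1 q.2 (S :\ (u, v)).
Proof.
move=> hS cS; have [sF uvS hnc _] := nc_chainP _ _ _ _ hS.
have [|q qS' qmax] := exists_maximal below_irr below_trans (A := S :\ (u, v)).
  by rewrite -card_gt0; move: cS; rewrite [#|S|](cardsD1 (u, v)) uvS.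
have /setD1P[quv qS] := qS'.
exists q; first exact: nc_chain_below hS qS quv.
apply: nc_chain_of_below; rewrite -?surjective_pairing //.
- exact: subset_trans (subsetDl _ _) sF.
- by move=> s t /setD1P[_ sS] /setD1P[_ tS]; exact: hnc.
- move=> s sS'; case: (eqVneq s q) => //= ne.
  have /setD1P[_ sS] := sS'.
  by case/orP: (hnc _ _ sS qS ne) => // bqs; have := qmax s sS'; rewrite bqs.
Qed.

Lemma chain_num_ge F u v S : nc_chain F u v S -> #|S| <= chain_num F u v.
Proof. exact: leq_bigmax_cond. Qed.

Lemma chain_num_attained F u v : (u, v) \in F ->
  exists2 S, nc_chain F u v S & #|S| = chain_num F u v.
Proof.
move=> /nc_chain1 h1; rewrite /chain_num (bigmax_eq_arg _ h1).
by case: arg_maxnP => // S hS _; exists S.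
Qed.

Lemma rconfig_row_partner F u : is_rconfig F -> exists v, (u, v) \in F.
Proof.
case=> /(_ u)/eqP/cards1P[v row] _; exists v.
by have := set11 v; rewrite -row inE.
Qed.

Lemma rconfig_col_partner F v : is_rconfig F -> exists u, (u, v) \in F.
Proof.
case=> _ /(_ v)/eqP/cards1P[u col]; exists u.
by have := set11 u; rewrite -col inE.
Qed.

Lemma Phi_a_rconfig F u v : is_rconfig F -> (u, v) \in F -> Phi_a F u = chain_num F u v.
Proof.
case=> hrow _ uvF; have /eqP/cards1P[v0 row] := hrow u.
have e : v0 = v by apply/esym/set1P; rewrite -row inE.
by apply: big_pred1 => v'; rewrite /= -e -in_set1 -row inE.
Qed.

Lemma Phi_b_rconfig F u v : is_rconfig F -> (u, v) \in F -> Phi_b F v = chain_num F u v.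
Proof.
case=> _ hcol uvF; have /eqP/cards1P[u0 col] := hcol v.
have e : u0 = u by apply/esym/set1P; rewrite -col inE.
by apply: big_pred1 => u'; rewrite /= -e -in_set1 -col inE.
Qed.

End Chains.

Section Supported.
Variables (n r : nat) (a b : idx n r -> nat).
Local Notation M := (level_match a b).
Let ltIP := ltI_strict n r.
Let gtIP := strict_total_flip ltIP.

Definition supported := forall p, p \in M -> 1 < a p.1 ->
  exists2 q, q \in M & below q p && (a q.1 == (a p.1).-1).

(* Dropping (u, v) from a longest chain at (u, v) leaves a chain at its new top
   (x, y), so a x >= a u - 1; putting (u, v) on a longest chain at (x, y) gives
   a x < a u. *)
Lemma supported_of_Phi_a : is_rconfig M -> Phi_a M =1 a -> supported.
Proof.
move=> hrc hPa [u v] uvM /= u1.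
have num x y : (x, y) \in M -> chain_num M x y = a x.
  by move=> xyM; rewrite -hPa (Phi_a_rconfig hrc xyM).
have [S hS cS] := chain_num_attained uvM; rewrite num // in cS.
have [|[x y] /= xyuv hxy] := nc_chain_predecessor hS; first by rewrite cS.
have [/subsetP sM xyS _ _] := nc_chainP _ _ _ _ hxy.
have xyM := sM _ xyS.
have le1 : (a u).-1 <= a x.
  rewrite -(num _ _ xyM); apply: leq_trans (chain_num_ge hxy).
  have [_ uvS _ _] := nc_chainP _ _ _ _ hS.
  by rewrite -cS [#|S|](cardsD1 (u, v)) uvS.
have [Sxy hSxy cSxy] := chain_num_attained xyM.
have [huv cuv] := nc_chain_extend hSxy uvM xyuv.
have le2 := chain_num_ge huv; rewrite cuv cSxy !num // in le2.
exists (x, y) => //; rewrite xyuv /= eqn_leq le1 andbT -ltnS prednK //.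
exact: ltn_trans u1.
Qed.

Hypothesis a_pos : forall x, 0 < a x.
Hypothesis hsup : supported.

Lemma level_match_nbelow p q : p \in M -> q \in M -> a p.1 = a q.1 -> ~~ below p q.
Proof.
case: p q => [x y] [x' y']; rewrite !in_level_match /= => /andP[/eqP e /eqP h].
move=> /andP[/eqP e' /eqP h'] ex; apply/negP=> /andP[/= lx ly]; rewrite -ex in h'.
have xA : x \in A_ a (a x) by rewrite inE.
have y'B : y' \in B_ b (a x) by rewrite inE ex e'.
have := rank_of_mono ltIP xA lx; rewrite h h' => /ltn_trans/(_ (rank_of_mono gtIP y'B ly)).
by rewrite ltnn.
Qed.

Lemma supported_descend p j : p \in M -> 0 < j -> j <= a p.1 ->
  exists2 q, q \in M & (a q.1 == j) && ((q == p) || below q p).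
Proof.
move=> pM j0 /subnK/esym; move: (a p.1 - j) => m.
elim: m p pM => [|m IH] p pM e; first by exists p; rewrite // e add0n !eqxx.
have [|q qM /andP[qp /eqP eq]] := hsup pM; first by rewrite e; lia.
have [|q' q'M /andP[q'j q'q]] := IH q qM; first by rewrite eq e addSn.
exists q' => //; rewrite q'j; case/orP: q'q => [/eqP->|q'q]; first by rewrite qp orbT.
by rewrite (below_trans q'q qp) orbT.
Qed.

Lemma below_level_lt p q : p \in M -> q \in M -> below q p -> a q.1 < a p.1.
Proof.
move=> pM qM qp; rewrite ltnNge; apply/negP => pq.
have [q' q'M /andP[/eqP e q'q]] := supported_descend qM (a_pos p.1) pq.
have q'p : below q' p by case/orP: q'q => [/eqP->//|/below_trans]; apply.
by have := level_match_nbelow q'M pM e; rewrite q'p.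
Qed.

(* The levels along a noncrossing chain at (u, v) are distinct and lie in [1, a u]. *)
Lemma nc_chain_card_le u v S : nc_chain M u v S -> #|S| <= a u.
Proof.
move=> hS; have [/subsetP sM uvS hnc _] := nc_chainP _ _ _ _ hS.
rewrite cardE -(size_map (fun s => a s.1)) -[a u](size_iota 1).
apply: uniq_leq_size.
  rewrite map_inj_in_uniq ?enum_uniq // => p q; rewrite !mem_enum => pS qS e.
  apply/eqP/negPn/negP => /(hnc _ _ pS qS)/orP[] pq.
    by have := level_match_nbelow (sM _ pS) (sM _ qS) e; rewrite pq.
  by have := level_match_nbelow (sM _ qS) (sM _ pS) (esym e); rewrite pq.
move=> k /mapP[s]; rewrite mem_enum => sS ->; rewrite mem_iota a_pos add1n ltnS /=.
case: (eqVneq s (u, v)) => [->//|suv].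
exact: ltnW (below_level_lt (sM _ uvS) (sM _ sS) (nc_chain_below hS sS suv)).
Qed.

Lemma nc_chain_exists p : p \in M -> exists2 S, nc_chain M p.1 p.2 S & #|S| = a p.1.
Proof.
have [k] := ubnP (a p.1); elim: k p => // k IH p.
rewrite ltnS => pk pM; case: (ltnP 1 (a p.1)) => p1; last first.
  exists [set (p.1, p.2)]; first by apply: nc_chain1; rewrite -surjective_pairing.
  by rewrite cards1; apply/eqP; rewrite eqn_leq p1 a_pos.
have [q qM /andP[qp /eqP eq]] := hsup pM p1.
have [|Sq hSq cSq] := IH q _ qM; first by rewrite eq; lia.
have [|hS cS] := nc_chain_extend hSq pM; first by rewrite -surjective_pairing.
by exists (p |: Sq); rewrite // cS cSq eq prednK.
Qed.

Lemma chain_num_level_match u v : (u, v) \in M -> chain_num M u v = a u.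
Proof.
move=> uvM; apply/eqP; rewrite eqn_leq; apply/andP; split.
  by apply/bigmax_leqP => S; exact: nc_chain_card_le.
by have [S hS <-] := nc_chain_exists uvM; exact: chain_num_ge.
Qed.

End Supported.

Section ConditionC.
Variables (n r : nat) (a b : idx n r -> nat).
Let ltIP := ltI_strict n r.
Let gtIP := strict_total_flip ltIP.
Local Notation lo k x := (rank_of (@ltI n r) (A_ a k) x).
Local Notation hi k y := (rank_of (fun s t => @ltI n r t s) (B_ b k) y).
Hypothesis a_pos : forall x, 0 < a x.

Lemma kk_rank u : kk a u = (lo (a u) u).+1.
Proof.
rewrite -(card_upto_rank_of ltIP) ?inE //.
by apply: eq_card => x; rewrite !inE /leI andbC.
Qed.

Lemma ll_rank u : ll a u = lo (a u).-1 u.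
Proof.
apply: eq_card => x; rewrite !inE /leI andbC.
case: (eqVneq x u) => [->|//]; rewrite (st_irr ltIP) andbF.
by have := a_pos u; case: (a u) => // k _; rewrite /= andbT; lia.
Qed.

Lemma jth_to_last_rank c j y : jth_to_last b c j y = (b y == c) && ((hi c y).+1 == j).
Proof.
rewrite /jth_to_last; case: eqP => //= byc.
rewrite -(card_upto_rank_of gtIP) ?inE ?byc //; congr (_ == _).
by apply: eq_card => z; rewrite !inE /leI andbC (eq_sym y).
Qed.

Lemma condC_card_le : condC a b -> forall k, 1 < k -> #|A_ a k| <= #|B_ b k|.
Proof.
move=> hC k k1; apply: (card_le_of_rank_bound ltIP) => u; rewrite inE => /eqP uk.
by rewrite -uk in k1 *; have [_ _ + _] := hC u k1; rewrite kk_rank.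
Qed.

Hypothesis hbal : balanced a b.

Lemma condC_of_supported : supported a b -> condC a b.
Proof.
move=> hsup u u1; rewrite kk_rank ll_rank.
have [v uvM] := rconfig_row_partner u (proj2 (level_match_rconfig a b) hbal).
have [[x y1] xyM /andP[/andP[/= xu y1v] /eqP ax]] := hsup (u, v) uvM u1.
move: uvM xyM; rewrite !in_level_match /= ax => /andP[/eqP bv /eqP huv] /andP[/eqP by1 /eqP hxy].
have xA : x \in A_ a (a u).-1 by rewrite inE ax.
have lo_x := rank_of_mono ltIP xA xu.
have LB : lo (a u).-1 u <= #|B_ b (a u).-1|.
  by rewrite -hbal; apply/subset_leq_card/subsetP => z; rewrite inE => /andP[].
have [|y yB hy] := rank_of_surj gtIP (A := B_ b (a u).-1) (i := (lo (a u).-1 u).-1).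
  by apply: leq_trans LB; rewrite prednK // (leq_ltn_trans _ lo_x).
have yy1 : (y1 == y) || ltI y y1.
  by apply: (rank_of_le_inv gtIP yB); rewrite hy -hxy -ltnS prednK // (leq_ltn_trans _ lo_x).
split=> //; first exact: leq_ltn_trans lo_x.
  by rewrite -hbal rank_of_lt_card // inE.
exists y, v; rewrite !jth_to_last_rank hy prednK ?(leq_ltn_trans _ lo_x) // -bv huv.
rewrite inE in yB; rewrite yB !eqxx /=.
by case/orP: yy1 => [/eqP <- //|yy1]; rewrite (st_trans ltIP yy1 y1v).
Qed.

Lemma supported_of_condC : condC a b -> supported a b.
Proof.
move=> hC [u v] uvM /= u1; have hrc := proj2 (level_match_rconfig a b) hbal.
have [_ _ _ [y1 [v' /and3P[]]]] := hC u u1.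
rewrite !jth_to_last_rank kk_rank ll_rank.
move=> /andP[/eqP by1 /eqP hy1] /andP[/eqP bv' /eqP hv'] y1v'.
have := uvM; rewrite in_level_match => /andP[/eqP bv /eqP huv].
have ev : v' = v.
  apply: (rank_of_inj gtIP (A := B_ b (a u))); rewrite ?inE ?bv' -?bv //.
  by case: hv' => ->.
subst v'; have [x xyM] := rconfig_col_partner y1 hrc.
have := xyM; rewrite in_level_match by1 => /andP[/eqP ax /eqP hxy].
exists (x, y1); rewrite // /below /= y1v' ax eqxx !andbT.
apply: (lt_of_rank_of_lt ltIP (A := A_ a (a u).-1)).
by rewrite -ax hxy ax hy1.
Qed.

End ConditionC.

Lemma perm_id_of_ge d (s : {perm 'I_d}) : (forall j : 'I_d, j <= s j) -> s =1 id.
Proof.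
move=> hs; have := @leqif_sum 'I_d xpredT (fun j : 'I_d => j == s j :> nat)
  (fun j : 'I_d => j : nat) (fun j => s j : nat) (fun j _ => leqif_eq (hs j)).
rewrite [X in _ <= X ?= iff _](reindex_inj (@perm_inj _ s^-1)) /=.
under [X in _ <= X ?= iff _]eq_bigr do rewrite permKV.
by case=> _; rewrite eqxx => /esym/forallP h j; apply/esym/eqP/h.
Qed.

Lemma balanced_of_Wstar n r d (a b : idx n r -> nat) : in_Wstar d a b ->
  (forall k, 1 < k -> #|A_ a k| <= #|B_ b k|) -> balanced a b.
Proof.
case=> ha [hb [s hs]] hle.
(* [hs j] reads |A_(j+1)| - |B_(j+1)| = j - s j. *)
have sid : forall j, s j = j.
  apply: perm_id_of_ge => j; case: (posnP j) => [-> //|j0].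
  have := hs j; have := hle j.+1 j0; rewrite /A_ /B_.
  move: #|_| #|_| => x y; lia.
have level_empty (c : idx n r -> nat) k : (forall x, 0 < c x <= d) -> ~~ (0 < k <= d) ->
    #|[set x | c x == k]| = 0.
  move=> hc hk; apply/eqP; rewrite cards_eq0; apply/eqP/setP => x; rewrite !inE.
  by apply/negP => /eqP ck; move: hk; rewrite -ck hc.
move=> k; case: (boolP (0 < k <= d)) => hk; last by rewrite /A_ /B_ !level_empty.
have k1d : k.-1 < d by lia.
have := hs (Ordinal k1d); rewrite sid /= prednK; last by lia.
by rewrite /A_ /B_; move: #|_| #|_| => x y; lia.
Qed.

Theorem lemma8 (n r d : nat) (hn : (0 < n)%N) (hr : (0 < r)%N) (hd : (0 < d)%N)
  (a b : idx n r -> nat) (hw : in_Wstar d a b) :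
  (is_rconfig (phi d a b) /\ Phi_a (phi d a b) =1 a /\ Phi_b (phi d a b) =1 b)
  <-> condC a b.
Proof.
have [ha [_ _]] := hw.
have a_pos x : 0 < a x by case/andP: (ha x).
have a_le x : a x <= d by case/andP: (ha x).
rewrite (phi_level_match b a_le); split=> [[hrc [hPa _]] | hC].
  apply: (condC_of_supported a_pos); first exact/level_match_rconfig.
  exact: supported_of_Phi_a.
have hbal := balanced_of_Wstar hw (condC_card_le hC).
have hsup := supported_of_condC a_pos hbal hC.
have hrc := proj2 (level_match_rconfig a b) hbal.
split=> //; split=> [u | v].
  have [v uvM] := rconfig_row_partner u hrc.
  by rewrite (Phi_a_rconfig hrc uvM) (chain_num_level_match a_pos hsup uvM).
have [u uvM] := rconfig_col_partner v hrc.
rewrite (Phi_b_rconfig hrc uvM) (chain_num_level_match a_pos hsup uvM).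
exact: (level_match_level uvM).
Qed.
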